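(* Let $(Q,\rightarrow)$ be a finite transition system, $\mathscr{R}$ a preorder on $Q$ and $\mathscr{P}\subseteq\mathscr{R}$ an equivalence relation with a representative $E.\mathrm{rep}\in E$ fixed for each block $E$ of $\mathscr{P}$. Let $E$ be a block of $\mathscr{P}$ and $B$ a block of $\mathscr{R}$ such that $E\rightarrow B$ and $\mathrm{RelCount}_{(\mathscr{P},\mathscr{R})}(E,B)=0$ (a splitter transition of type 1). Let $P'=\mathrm{Split}(P_{\mathscr{P}},\rightarrow^{-1}(\mathscr{R}(B)))$. Then the equivalence relation $\mathscr{P}_{P'}$ is strictly included in $\mathscr{P}$ and contains every $\mathscr{R}$-block-stable equivalence relation included in $\mathscr{P}$.
   Context: A preorder is a reflexive transitive relation; its blocks are $[q]_{\mathscr{R}}=\{q'\mid q\,\mathscr{R}\,q'\wedge q'\,\mathscr{R}\,q\}$. $\mathscr{R}(X)=\{q'\mid\exists q\in X.\ q\,\mathscr{R}\,q'\}$, $\rightarrow^{-1}(Y)=\{q\mid\exists y\in Y.\ q\rightarrow y\}$. For sets $X,Y$ write $X\rightarrow Y$ if some $x\in X,y\in Y$ have $x\rightarrow y$, and $X\,\mathscr{R}\,Y$ if $(X\times Y)\cap\mathscr{R}\ne\emptyset$. $P_{\mathscr{P}}$ is the partition of $Q$ into blocks of $\mathscr{P}$, and $\mathscr{P}_P=\bigcup_{E\in P}E\times E$ for a partition $P$. $\mathrm{RelCount}_{(\mathscr{P},\mathscr{R})}(E,B)=|\{E'\in P_{\mathscr{P}}\mid E.\mathrm{rep}\rightarrow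 E'\wedge B\,\mathscr{R}\,E'\}|$. $\mathrm{Split}(P,M)$ is the partition obtained from $P$ by replacing each block $E$ with $E\cap M\neq\emptyset$ and $E\not\subseteq M$ by the two blocks $E\cap M$ and $E\setminus M$. An equivalence relation $\mathscr{P}''\subseteq\mathscr{R}$ is $\mathscr{R}$-block-stable if for all $b,d,d'$ with $d\,\mathscr{P}''\,d'$: $d\in\rightarrow^{-1}(\mathscr{R}(b))\iff d'\in\rightarrow^{-1}(\mathscr{R}(b))$. *)

From mathcomp Require Import all_boot.
Set Implicit Arguments. Unset Strict Implicit. Unset Printing Implicit Defensive.

Section Defs.
Variable Q : finType.

Definition preorder (R : rel Q) : Prop := reflexive R /\ transitive R.
Definition is_equiv (P : rel Q) : Prop := [/\ reflexive P, symmetric P & transitive P].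
Definition subrel_of (P R : rel Q) : Prop := forall x y, P x y -> R x y.

Definition blk (R : rel Q) (q : Q) : {set Q} := [set q' | R q q' && R q' q].
Definition blocks (R : rel Q) : {set {set Q}} := [set blk R q | q : Q].
Definition img_rel (R : rel Q) (X : {set Q}) : {set Q} := [set q' | [exists q in X, R q q']].
Definition pre_tr (tr : rel Q) (Y : {set Q}) : {set Q} := [set q | [exists y in Y, tr q y]].
Definition set_trans (tr : rel Q) (X Y : {set Q}) : bool :=
  [exists x in X, exists y in Y, tr x y].
Definition set_rel (R : rel Q) (X Y : {set Q}) : bool :=
  [exists x in X, exists y in Y, R x y].
Definition rel_of_partition (Pt : {set {set Q}}) : rel Q :=
  fun x y => [exists E in Pt, (x \in E) && (y \in E)].

Definition RelCount (tr P R : rel Q) (rep : {set Q} -> Q) (E B : {set Q}) : nat :=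
  #|[set E' in blocks P | set_trans tr [set rep E] E' && set_rel R B E']|.

Definition splits (M E : {set Q}) : bool := (E :&: M != set0) && ~~ (E \subset M).
Definition SplitP (Pt : {set {set Q}}) (M : {set Q}) : {set {set Q}} :=
  [set E in Pt | ~~ splits M E]
  :|: [set E :&: M | E in Pt & splits M E]
  :|: [set E :\: M | E in Pt & splits M E].

Definition block_stable (tr R P2 : rel Q) : Prop :=
  is_equiv P2 /\ subrel_of P2 R /\
  forall b d d', P2 d d' ->
    (d \in pre_tr tr (img_rel R [set b])) = (d' \in pre_tr tr (img_rel R [set b])).
End Defs.

(* Splitting the blocks of an equivalence P along a set M yields exactly the
   relation "P x y and x, y agree on membership in M".  Take M to be
   ->^{-1}(R(B)).  The block E is then genuinely split: it contains a state
   with a transition into B, which lies in M, whereas RelCount = 0 says that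
   E.rep has no transition into R(B).  Since B is an R-block, R(B) = R({b})
   for every b in B, so an R-block-stable P2 never separates two states by
   membership in M; if moreover P2 is included in P, it is included in the
   split relation. *)

From mathcomp Require Import all_boot.

Set Implicit Arguments. Unset Strict Implicit. Unset Printing Implicit Defensive.

Section Splitting.
Variable Q : finType.
Implicit Types (Pt : {set {set Q}}) (M E F X Y : {set Q}) (x y : Q).

Lemma SplitP_sub Pt M E : E \in SplitP Pt M -> exists2 F, F \in Pt & E \subset F.
Proof.
rewrite !inE => /orP[/orP[/andP[EPt _] | ] | ]; first by exists E.
- by case/imsetP=> F; rewrite inE => /andP[FPt _] ->; exists F; rewrite ?subsetIl.
- by case/imsetP=> F; rewrite inE => /andP[FPt _] ->; exists F; rewrite ?subsetDl.
Qed.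

Lemma SplitP_homogeneous Pt M E : E \in SplitP Pt M ->
  {in E &, forall x y, (x \in M) = (y \in M)}.
Proof.
move=> ESP x y xE yE; move: ESP; rewrite !inE => /orP[/orP[/andP[_] | ] | ].
- rewrite /splits negb_and !negbK setI_eq0 => /orP[EM | /subsetP EM]; last by rewrite !EM.
  by rewrite !(disjointFr EM).
- by case/imsetP=> F _ defE; move: xE yE; rewrite defE !inE => /andP[_ ->] /andP[_ ->].
- case/imsetP=> F _ defE; move: xE yE; rewrite defE !inE.
  by move=> /andP[/negbTE-> _] /andP[/negbTE-> _].
Qed.

Lemma rel_of_SplitP Pt M x y :
  rel_of_partition (SplitP Pt M) x y =
  rel_of_partition Pt x y && ((x \in M) == (y \in M)).
Proof.
apply/existsP/andP => [[E /and3P[ESP xE yE]] | [/existsP[F /and3P[FPt xF yF]] /eqP xyM]].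
  have [F FPt /subsetP EF] := SplitP_sub ESP.
  split; first by apply/existsP; exists F; rewrite FPt !EF.
  by rewrite (SplitP_homogeneous ESP xE yE).
have [Fsplit | Fnsplit] := boolP (splits M F); last first.
  by exists F; rewrite xF yF andbT !inE FPt Fnsplit.
have FsplitPt : F \in [set F in Pt | splits M F] by rewrite inE FPt.
case xM: (x \in M).
- exists (F :&: M); rewrite !inE xF yF -xyM xM !andbT.
  by apply/orP; left; apply/orP; right; apply: imset_f.
- exists (F :\: M); rewrite !inE xF yF -xyM xM !andbT.
  by apply/orP; right; apply: imset_f.
Qed.

Lemma rel_of_blocks (P : rel Q) : is_equiv P -> rel_of_partition (blocks P) =2 P.
Proof.
case=> Prefl Psym Ptrans x y; apply/existsP/idP => [[_ /and3P[/imsetP[q _ ->]]] | Pxy].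
  by rewrite !inE => /andP[_ Pxq] /andP[Pqy _]; apply: Ptrans Pxq Pqy.
by exists (blk P x); rewrite imset_f // !inE Prefl Pxy Psym.
Qed.

Lemma img_rel_blk (R : rel Q) b : preorder R -> img_rel R (blk R b) = img_rel R [set b].
Proof.
case=> Rrefl Rtrans; apply/setP => q; rewrite !inE.
apply/existsP/existsP => -[c /andP[cb Rcq]].
  by exists b; rewrite set11; move: cb; rewrite inE => /andP[Rbc _]; apply: Rtrans Rbc Rcq.
by exists b; move/set1P: cb Rcq => -> ->; rewrite inE Rrefl.
Qed.

Lemma set_trans_pre_img tr (R : rel Q) X Y : reflexive R -> set_trans tr X Y ->
  exists2 x, x \in X & x \in pre_tr tr (img_rel R Y).
Proof.
move=> Rrefl /existsP[x /andP[xX /existsP[y /andP[yY txy]]]].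
exists x => //; rewrite inE; apply/existsP; exists y; rewrite txy andbT inE.
by apply/existsP; exists y; rewrite yY Rrefl.
Qed.

Lemma RelCount0_rep_notin tr (P R : rel Q) rep E B : reflexive P ->
  RelCount tr P R rep E B = 0 -> rep E \notin pre_tr tr (img_rel R B).
Proof.
move=> Prefl /cards0_eq count0; rewrite inE.
apply/existsP => -[y /andP[yRB try]]; move: yRB; rewrite inE => /existsP[b /andP[bB Rby]].
suff : blk P y \in set0 by rewrite inE.
rewrite -count0 !inE imset_f //=; apply/andP; split.
- by apply/existsP; exists (rep E); rewrite set11; apply/existsP; exists y; rewrite !inE !Prefl.
- by apply/existsP; exists b; rewrite bB; apply/existsP; exists y; rewrite !inE !Prefl.
Qed.

End Splitting.

Theorem lemma3 (Q : finType) (tr R P : rel Q) (rep : {set Q} -> Q)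
  (HR : preorder R) (HP : is_equiv P) (HPR : subrel_of P R)
  (Hrep : forall E, E \in blocks P -> rep E \in E)
  (E B : {set Q}) (HE : E \in blocks P) (HB : B \in blocks R)
  (HEB : set_trans tr E B) (Hcount : RelCount tr P R rep E B = 0) :
  let P' := SplitP (blocks P) (pre_tr tr (img_rel R B)) in
  (subrel_of (rel_of_partition P') P /\
   exists x y, P x y /\ ~~ rel_of_partition P' x y) /\
  (forall P2 : rel Q, block_stable tr R P2 -> subrel_of P2 P ->
     subrel_of P2 (rel_of_partition P')).
Proof.
move=> P'; set M := pre_tr tr (img_rel R B).
have P'E x y : rel_of_partition P' x y = P x y && ((x \in M) == (y \in M)).
  by rewrite rel_of_SplitP rel_of_blocks.
have [Prefl _ _] := HP.
split; [split|].
- by move=> x y; rewrite P'E => /andP[].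
- have [x xE xM] := set_trans_pre_img HR.1 HEB.
  have repM := RelCount0_rep_notin Prefl Hcount.
  exists x, (rep E); rewrite P'E xM (negbTE repM) andbF; split=> //.
  by rewrite -rel_of_blocks //; apply/existsP; exists E; rewrite HE xE Hrep.
- move=> P2 [_ [_ P2stable]] P2P x y P2xy; case/imsetP: HB => b _ defB.
  rewrite P'E P2P //= /M defB img_rel_blk //; apply/eqP; exact: P2stable.
Qed.
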